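(* In the setting of the shrinking generator with $SR_1$, $SR_2$ maximal-length LFSRs of coprime lengths $L_1<L_2$, let $C_2(x)\in GF(2)[x]$ be the characteristic polynomial of $SR_2$ and let $\lambda$ be a root of $C_2(x)$ in $GF(2^{L_2})$. Then the primitive polynomial $P(x)$ such that the characteristic polynomial of the shrunken sequence is $P(x)^N$ is $$P(x)=(x+\lambda^{E})(x+\lambda^{2E})(x+\lambda^{4E})\cdots(x+\lambda^{2^{L_2-1}E}),\qquad E=2^0+2^1+\cdots+2^{L_1-1}=2^{L_1}-1.$$ *)

From HB Require Import structures.
From mathcomp Require Import all_boot all_order all_algebra all_field.
Set Implicit Arguments. Unset Strict Implicit. Unset Printing Implicit Defensive.
Import Order.TTheory GRing.Theory Num.Theory.
Local Open Scope ring_scope.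

(* A sequence s over a ring R is generated by an LFSR with characteristic
   polynomial c = c_0 + c_1 x + ... + c_L x^L  iff
   c_0 s_n + c_1 s_(n+1) + ... + c_L s_(n+L) = 0 for all n. *)
Definition lin_rec (R : nzRingType) (c : {poly R}) (s : nat -> R) : Prop :=
  forall n : nat, \sum_(i < size c) c`_i * s (n + i)%N = 0.

Definition ml_lfsr (L : nat) (C : {poly 'F_2}) (s : nat -> 'F_2) : Prop :=
  [/\ size C = L.+1, primitive_poly C, lin_rec C s & exists n, s n != 0].

Definition shrunken (u v z : nat -> 'F_2) : Prop :=
  exists t : nat -> nat,
    [/\ forall j, (t j < t j.+1)%N,
        forall n, u n = 1 <-> exists j, t j = n
      & forall j, z j = v (t j)].

(* The shrunken sequence is a regular decimation of v: if t_0 < t_1 < ... are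
   the times at which the m-sequence u equals 1, then u has period
   E = 2^L1 - 1 and exactly N = 2^(L1-1) ones per period, so
   t_(j+N) = t_j + E.  Hence whenever v satisfies the recurrence P(X^E), the
   shrunken sequence satisfies P(X^N) = P(X)^N (Frobenius over GF(2)).
   Take for P the polynomial whose roots are the conjugates (λ^E)^(2^i),
   i < L2: P(X^E) vanishes at λ, so the characteristic polynomial C2 of v
   divides it.  As gcd(2^L1 - 1, 2^L2 - 1) = 2^gcd(L1,L2) - 1 = 1, λ^E is again
   a primitive (2^L2 - 1)-th root of unity; its L2 conjugates are distinct,
   which makes P primitive of degree L2, and P has coefficients in GF(2)
   because squaring permutes its roots. *)

From HB Require Import structures.
From mathcomp Require Import all_boot all_order all_algebra all_field zify.
Import Order.TTheory GRing.Theory Num.Theory.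
Local Open Scope ring_scope.

Set Implicit Arguments. Unset Strict Implicit. Unset Printing Implicit Defensive.

(** * Polynomials acting on sequences *)

Section ShiftAction.

Variable R : comNzRingType.
Implicit Types (p q : {poly R}) (s : nat -> R).

(* [shift_act q s] is the sequence [q(σ) s], where σ is the left shift. *)
Definition shift_act q s n : R := \sum_(i < size q) q`_i * s (n + i)%N.

Lemma sum_coef_widen q (f : nat -> R) m : (size q <= m)%N ->
  \sum_(i < size q) q`_i * f i = \sum_(i < m) q`_i * f i.
Proof.
move=> le_q_m; rewrite (big_ord_widen m (fun i => q`_i * f i) le_q_m).
rewrite big_mkcond /=; apply: eq_bigr => i _; case: ltnP => // le_q_i.
by rewrite nth_default // mul0r.
Qed.

Lemma shift_act_widen q s n m : (size q <= m)%N ->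
  shift_act q s n = \sum_(i < m) q`_i * s (n + i)%N.
Proof. exact: (sum_coef_widen (fun i => s (n + i)%N)). Qed.

Lemma eq_shift_act q s1 s2 n1 n2 :
  (forall i, s1 (n1 + i)%N = s2 (n2 + i)%N) ->
  shift_act q s1 n1 = shift_act q s2 n2.
Proof. by move=> eq_s; apply: eq_bigr => i _; rewrite eq_s. Qed.

Lemma shift_act0 s n : shift_act 0 s n = 0.
Proof. by rewrite /shift_act size_poly0 big_ord0. Qed.

Lemma shift_act_seq0 q n : shift_act q (fun=> 0) n = 0.
Proof. by rewrite /shift_act big1 // => i _; rewrite mulr0. Qed.

Lemma shift_actD p q s n :
  shift_act (p + q) s n = shift_act p s n + shift_act q s n.
Proof.
pose m := maxn (size p) (size q).
rewrite !(@shift_act_widen _ _ _ m) ?leq_maxl ?leq_maxr ?size_polyD //.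
by rewrite -big_split; apply: eq_bigr => i _; rewrite coefD mulrDl.
Qed.

Lemma shift_actC c s n : shift_act c%:P s n = c * s n.
Proof.
by rewrite (@shift_act_widen _ _ _ 1) ?size_polyC_leq1 // big_ord1 coefC addn0.
Qed.

Lemma shift_actCM c q s n : shift_act (c%:P * q) s n = c * shift_act q s n.
Proof.
rewrite mul_polyC (@shift_act_widen _ _ _ (size q)) ?size_scale_leq //.
by rewrite mulr_sumr; apply: eq_bigr => i _; rewrite coefZ mulrA.
Qed.

Lemma shift_actXM q s n : shift_act ('X * q) s n = shift_act q s n.+1.
Proof.
rewrite (@shift_act_widen _ _ _ (size q).+1); last first.
  by rewrite (leq_trans (size_polyMleq _ _)) // size_polyX.
rewrite big_ord_recl coefXM mul0r add0r; apply: eq_bigr => i _.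
by rewrite coefXM addnS.
Qed.

Lemma shift_actM p q s n :
  shift_act (p * q) s n = shift_act p (shift_act q s) n.
Proof.
elim/poly_ind: p n => [|p c IHp] n; first by rewrite mul0r !shift_act0.
rewrite mulrDl -mulrA mulrCA !shift_actD shift_actXM IHp shift_actCM shift_actC.
congr (_ + _); rewrite mulrC shift_actXM; apply: eq_shift_act => i.
by rewrite addSnnS.
Qed.

Lemma shift_actXn m s n : shift_act 'X^m s n = s (n + m)%N.
Proof.
elim: m n => [|m IHm] n; first by rewrite expr0 -polyC1 shift_actC mul1r addn0.
by rewrite exprS shift_actXM IHm addSnnS.
Qed.

Lemma shift_act_compXn p m s n :
  shift_act (p \Po 'X^m) s n = \sum_(i < size p) p`_i * s (n + i * m)%N.
Proof.
elim/poly_ind: p n => [|p c IHp] n.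
  by rewrite comp_poly0 shift_act0 size_poly0 big_ord0.
rewrite comp_polyD comp_polyM comp_polyX comp_polyC shift_actD shift_actC.
rewrite mulrC shift_actM shift_actXn IHp.
rewrite [RHS](sum_coef_widen (fun i => s (n + i * m)%N) (m := (size p).+1)); last first.
  rewrite (leq_trans (size_polyD _ _)) // geq_max (leq_trans (size_polyC_leq1 _)) //.
  by rewrite andbT (leq_trans (size_polyMleq _ _)) // size_polyX addn2.
rewrite big_ord_recl coefD coefMX coefC mul0n addn0 add0r addrC; congr (_ + _).
by apply: eq_bigr => i _; rewrite coefD coefMX coefC addr0 mulSn addnA (addnC n).
Qed.

End ShiftAction.

Section LinearRecurrence.

Variable R : comNzRingType.
Implicit Types (c q : {poly R}) (s : nat -> R).

Lemma shift_act_lin_rec q c s n :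
  lin_rec c s -> shift_act q (shift_act c s) n = 0.
Proof.
move=> rec_c; rewrite (@eq_shift_act _ _ _ (fun=> 0) n n) ?shift_act_seq0 //.
by move=> i; apply: rec_c.
Qed.

Lemma lin_rec_mull q c s : lin_rec c s -> lin_rec (q * c) s.
Proof.
by move=> rec_c n; rewrite -/(shift_act _ _ _) shift_actM shift_act_lin_rec.
Qed.

Lemma lin_rec_XnB d s : lin_rec ('X^d - 1) s <-> forall n, s (n + d)%N = s n.
Proof.
have shift_actXnB n : shift_act ('X^d - 1) s n = s (n + d)%N - s n.
  by rewrite -polyC1 -polyCN shift_actD shift_actXn shift_actC mulN1r.
split=> [rec_s n | per_s n].
  by apply/eqP; rewrite -subr_eq0 -shift_actXnB; apply/eqP/rec_s.
by rewrite -/(shift_act _ _ _) shift_actXnB per_s subrr.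
Qed.

Section MonicRecurrence.

Variables (c : {poly R}) (L : nat).
Hypotheses (size_c : size c = L.+1) (c_monic : c \is monic).

Lemma lin_rec_next s : lin_rec c s ->
  forall n, s (n + L)%N = - \sum_(i < L) c`_i * s (n + i)%N.
Proof.
have lead_c : c`_L = 1 by move/monicP: c_monic; rewrite lead_coefE size_c.
move=> rec_s n; apply/eqP; rewrite -addr_eq0 addrC.
by move: (rec_s n); rewrite size_c big_ord_recr lead_c mul1r => ->.
Qed.

Lemma eq_lin_rec s1 s2 a b : lin_rec c s1 -> lin_rec c s2 ->
    (forall i, (i < L)%N -> s1 (a + i)%N = s2 (b + i)%N) ->
  forall i, s1 (a + i)%N = s2 (b + i)%N.
Proof.
move=> rec_s1 rec_s2 eq_init i; elim/ltn_ind: i => i IHi.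
have [/eq_init // | le_L_i] := ltnP i L.
rewrite -(subnK le_L_i) !addnA !lin_rec_next //; congr (- _).
by apply: eq_bigr => k _; rewrite -!addnA IHi // -{2}(subnK le_L_i) ltn_add2l.
Qed.

End MonicRecurrence.

End LinearRecurrence.

Section IrreducibleAnnihilator.

Variable F : fieldType.
Implicit Types (C p q : {poly F}) (s : nat -> F).

Lemma irredp_coprimep C q : irreducible_poly C -> ~~ (C %| q) -> coprimep C q.
Proof.
move=> irr_C C_ndvd_q; apply/coprimepP => d d_dvd_C d_dvd_q.
have [//|eqp_dC] := irredp_XsubCP irr_C d_dvd_C.
by move: C_ndvd_q; rewrite -(eqp_dvdl _ eqp_dC) d_dvd_q.
Qed.

Lemma lin_rec_dvdp p q s : p %| q -> lin_rec p s -> lin_rec q s.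
Proof. by move=> /divpK <-; apply: lin_rec_mull. Qed.

Lemma lin_rec_coprimep p q s : coprimep p q -> lin_rec p s -> lin_rec q s ->
  forall n, s n = 0.
Proof.
case/Bezout_coprimepP=> [[a b]] /=; rewrite -size_poly_eq1.
case/size_poly1P=> c c_neq0 bezout rec_p rec_q n; apply/eqP.
rewrite -(mulrI_eq0 _ (lregP c_neq0)) -shift_actC -bezout shift_actD.
by rewrite !shift_actM !shift_act_lin_rec ?addr0.
Qed.

Lemma lin_rec_irredp_dvdp C q s n : irreducible_poly C ->
  lin_rec C s -> lin_rec q s -> s n != 0 -> C %| q.
Proof.
move=> irr_C rec_C rec_q; apply: contraNT => C_ndvd_q.
by rewrite (lin_rec_coprimep (irredp_coprimep irr_C C_ndvd_q) rec_C rec_q).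
Qed.

Lemma root_irredp_dvdp (K : fieldType) (f : {rmorphism F -> K}) C q x :
  irreducible_poly C -> root (map_poly f C) x -> root (map_poly f q) x -> C %| q.
Proof.
move=> irr_C rootC rootq; apply: contraLR rootq => C_ndvd_q.
rewrite /root; apply: coprimep_root rootC.
by rewrite coprimep_map irredp_coprimep.
Qed.

End IrreducibleAnnihilator.

(** * Maximal-length sequences *)

Section Periodic.

Variables (X : Type) (s : nat -> X) (T : nat).
Hypothesis s_per : forall n, s (n + T)%N = s n.

Lemma periodicM n k : s (n + k * T)%N = s n.
Proof. by elim: k => [|k IHk]; rewrite ?addn0 // mulSnr addnA s_per. Qed.

Lemma periodic_after a n : (0 < T)%N ->
  exists i, forall d, s (n + d)%N = s (a + i + d)%N.
Proof.
move=> T_gt0; exists (n + a * T - a)%N => d.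
have le_a : (a <= n + a * T)%N by rewrite (leq_trans _ (leq_addl _ _)) ?leq_pmulr.
by rewrite subnKC // addnAC periodicM.
Qed.

Lemma periodic_from a d : (0 < T)%N ->
  (forall i, s (a + i + d)%N = s (a + i)%N) -> forall n, s (n + d)%N = s n.
Proof.
move=> T_gt0 per_a n; have [i eq_s] := periodic_after a n T_gt0.
by rewrite eq_s -[n]addn0 eq_s addn0 per_a.
Qed.

End Periodic.

Lemma F2_neq1 (x : 'F_2) : (x != 1) = (x == 0).
Proof. by case: x => [[|[|]]]. Qed.

Lemma expr2_F2 (x : 'F_2) : x ^+ 2 = x.
Proof. by have := expf_card x; rewrite card_Fp. Qed.

Lemma pchar_F2ext (F : fieldExtType 'F_2) : 2 \in [pchar F].
Proof. by rewrite pchar_lalg pchar_Fp. Qed.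

Lemma card_qpoly_F2 (C : {poly 'F_2}) L : (0 < L)%N -> size C = L.+1 ->
  C \is monic -> #|{poly %/ C}|.-1 = (2 ^ L - 1)%N.
Proof.
by move=> L_gt0 size_C C_monic; rewrite card_monic_qpoly ?size_C ?ltnS ?card_Fp ?subn1.
Qed.

Section MaximalLengthSequence.

Variables (L : nat) (C : {poly 'F_2}) (u : nat -> 'F_2).
Hypotheses (L_gt0 : (0 < L)%N) (mlu : ml_lfsr L C u).

Local Notation T := (2 ^ L - 1)%N.

Lemma ml_lfsrP :
  [/\ C \is monic, irreducible_poly C, C %| 'X^T - 1
    & forall n, (0 < n < T)%N -> ~~ (C %| 'X^n - 1)].
Proof.
case: mlu => size_C /primitive_polyP[[irr_C C_monic]].
by rewrite (card_qpoly_F2 L_gt0 size_C C_monic).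
Qed.

Lemma mseq_period_gt0 : (0 < T)%N.
Proof. by rewrite subn_gt0 -{1}(expn0 2) ltn_exp2l. Qed.

Lemma mseq_periodic n : u (n + T)%N = u n.
Proof.
have [_ _ /divpK C_dvd _] := ml_lfsrP; case: mlu => _ _ rec_u _.
by move: n; apply/lin_rec_XnB; rewrite -C_dvd; apply: lin_rec_mull.
Qed.

Lemma mseq_not_periodic d : (0 < d < T)%N -> ~ (forall n, u (n + d)%N = u n).
Proof.
have [_ irr_C _ C_ndvd] := ml_lfsrP; case: mlu => _ _ rec_u [n un_neq0].
move=> d_range /lin_rec_XnB rec_d.
apply: (negP (C_ndvd d d_range)).
exact: lin_rec_irredp_dvdp irr_C rec_u rec_d un_neq0.
Qed.

Lemma mseq_window_inj a b : (a < T)%N -> (b < T)%N ->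
  (forall i, (i < L)%N -> u (a + i)%N = u (b + i)%N) -> a = b.
Proof.
have [size_C _ rec_u _] := mlu; have [C_monic _ _ _] := ml_lfsrP.
wlog le_ab : a b / (a <= b)%N => [wlog_ab|] a_lt b_lt eq_win.
  have [/wlog_ab|/ltnW/wlog_ab] := leqP a b; first exact.
  by move=> /(_ b_lt a_lt) eq_ba; apply/esym/eq_ba => i /eq_win.
apply/eqP; rewrite eqn_leq le_ab leqNgt; apply/negP => lt_ab.
have eq_u := eq_lin_rec size_C C_monic rec_u rec_u eq_win.
apply: (@mseq_not_periodic (b - a)).
  by rewrite subn_gt0 lt_ab (leq_ltn_trans (leq_subr _ _)).
apply: (periodic_from mseq_periodic (a := a) mseq_period_gt0) => i.
by rewrite addnAC subnKC ?(ltnW lt_ab) // eq_u.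
Qed.

Lemma mseq_window_neq0 a : ~ (forall i, (i < L)%N -> u (a + i)%N = 0).
Proof.
have [size_C _ rec_u [n un_neq0]] := mlu; have [C_monic _ _ _] := ml_lfsrP.
move=> win0; have rec0 : lin_rec C (fun=> 0 : 'F_2).
  by move=> m; apply: shift_act_seq0.
have u0 := eq_lin_rec (b := 0%N) size_C C_monic rec_u rec0 win0.
have [i eq_u] := periodic_after mseq_periodic a n mseq_period_gt0.
by move: un_neq0; rewrite -[n]addn0 eq_u addn0 u0 eqxx.
Qed.

Lemma mseq_count_ones : count (fun n => u n == 1) (iota 0%N T) = (2 ^ L.-1)%N.
Proof.
(* Over one period the length-L windows are pairwise distinct and nonzero, so
   the tails of the windows starting with 1 are distinct, and so are those
   starting with 0, which moreover avoid the zero tail. *)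
pose tail n := [ffun i : 'I_L.-1 => u (n + i.+1)%N].
have tailE n i (lt_i : (i.+1 < L)%N) :
    u (n + i.+1)%N = tail n (Ordinal (etrans (ltn_predRL i L) lt_i)).
  by rewrite ffunE.
have card_tails : #|{ffun 'I_L.-1 -> 'F_2}| = (2 ^ L.-1)%N.
  by rewrite card_ffun card_Fp // card_ord.
have uniq_tails (x : 'F_2) : uniq (map tail [seq n <- iota 0%N T | u n == x]).
  rewrite map_inj_in_uniq ?filter_uniq ?iota_uniq // => a b.
  rewrite !mem_filter !mem_iota => /andP[/eqP ua /andP[_ a_lt]].
  move=> /andP[/eqP ub /andP[_ b_lt]] eq_tail.
  apply: mseq_window_inj => // -[|i] lt_i; first by rewrite !addn0 ua ub.
  by rewrite !(tailE _ _ lt_i) eq_tail.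
have ones_le : (count (fun n => u n == 1%R) (iota 0 T) <= 2 ^ L.-1)%N.
  rewrite -size_filter -(size_map tail) -(card_uniqP (uniq_tails 1%R)) -card_tails.
  exact: max_card.
have zeros_le : (count (fun n => u n == 0%R) (iota 0 T) <= (2 ^ L.-1).-1)%N.
  rewrite -size_filter -(size_map tail) -(card_uniqP (uniq_tails 0%R)) -card_tails.
  rewrite -(cardC1 ([ffun=> 0] : {ffun 'I_L.-1 -> 'F_2})) subset_leq_card //.
  apply/subsetP => f /mapP[n].
  rewrite mem_filter => /andP[/eqP un0 _] -> /=; rewrite !inE.
  apply/eqP => tail0; apply: (mseq_window_neq0 (a := n)) => -[|i] lt_i.
    by rewrite addn0.
  by rewrite (tailE _ _ lt_i) tail0 ffunE.
have ones_zeros : (count (fun n => u n == 1%R) (iota 0 T)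
    + count (fun n => u n == 0%R) (iota 0 T) = T)%N.
  rewrite -[RHS](size_iota 0%N) -(count_predC (fun n => u n == 1%R)); congr (_ + _)%N.
  by apply: eq_count => n; rewrite /= F2_neq1.
have exp_L : (2 ^ L = 2 * 2 ^ L.-1)%N by rewrite -[in LHS](prednK L_gt0) expnS.
move: ones_le zeros_le ones_zeros exp_L; move: (count _ _) (count _ _).
move: (2 ^ L)%N (2 ^ L.-1)%N => pL pL1 ones zeros; lia.
Qed.

End MaximalLengthSequence.

(** * The shrunken sequence as a decimation *)

Section PeriodicEnumeration.

Variables (S : pred nat) (t : nat -> nat) (T N : nat).
Hypotheses (t_incr : forall j, (t j < t j.+1)%N)
  (t_enum : forall n, S n <-> exists j, t j = n).
Hypotheses (S_per : forall n, S (n + T)%N = S n) (S_count : count S (iota 0%N T) = N).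

Local Notation cnt m := (count S (iota 0%N m)).

Let leq_t : {mono t : i j / (i <= j)%N}.
Proof. exact/leq_mono/(homo_ltn ltn_trans t_incr). Qed.

Let cntS m : cnt m.+1 = (cnt m + S m)%N.
Proof. by rewrite -addn1 iotaD count_cat /= addn0. Qed.

Lemma enum_lt_count m i : (t i < m)%N = (i < cnt m)%N.
Proof.
elim: m i => [|m IHm] i //; rewrite ltnS leq_eqVlt IHm cntS.
have [Sm|nSm] := boolP (S m); last first.
  rewrite addn0 orbC; case: eqP => [tim|]; last by rewrite orbF.
  by case/negP: nSm; apply/t_enum; exists i.
have [k tk] := (t_enum m).1 Sm.
have k_cnt : k = cnt m.
  apply/eqP; rewrite eqn_leq -leq_t tk leqNgt IHm ltnn /=.
  by rewrite leqNgt -IHm tk ltnn.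
by rewrite -[X in t i == X]tk (inj_eq (incn_inj leq_t)) k_cnt addn1 ltnS [RHS]leq_eqVlt.
Qed.

Lemma count_enum i : cnt (t i) = i.
Proof.
have eq_lt j : (j < i)%N = (j < cnt (t i))%N.
  by rewrite -enum_lt_count (leqW_mono leq_t).
by apply/eqP; rewrite eqn_leq leqNgt -eq_lt ltnn leqNgt eq_lt ltnn.
Qed.

Lemma count_periodic m : cnt (m + T) = (cnt m + N)%N.
Proof.
elim: m => [|m IHm]; first by rewrite add0n S_count.
by rewrite addSn !cntS IHm S_per addnAC.
Qed.

Lemma enum_periodic j : t (j + N)%N = (t j + T)%N.
Proof.
have [k tk] : exists k, t k = (t j + T)%N.
  by apply/t_enum; rewrite S_per; apply/t_enum; exists j.
suff -> : (j + N)%N = k by [].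
by rewrite -(count_enum k) tk count_periodic count_enum.
Qed.

End PeriodicEnumeration.

Lemma shrunken_lin_rec (P : {poly 'F_2}) (u v z : nat -> 'F_2) (T N : nat) :
    (forall n, u (n + T)%N = u n) -> count (fun n => u n == 1) (iota 0%N T) = N ->
  lin_rec (P \Po 'X^T) v -> shrunken u v z -> lin_rec (P \Po 'X^N) z.
Proof.
move=> u_per u_count rec_v [t [t_incr t_enum zE]] j.
have enum_ones n : (u n == 1) <-> exists i, t i = n.
  by split=> [/eqP/t_enum|/t_enum ->].
have ones_per n : (u (n + T)%N == 1) = (u n == 1) by rewrite u_per.
have t_shift := enum_periodic t_incr enum_ones ones_per u_count.
have t_shiftM i : t (j + i * N)%N = (t j + i * T)%N.
  by elim: i => [|i IHi]; rewrite ?addn0 // !mulSnr !addnA t_shift IHi.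
rewrite -/(shift_act _ _ _) shift_act_compXn -[RHS](rec_v (t j)).
rewrite -/(shift_act _ _ _) shift_act_compXn.
by apply: eq_bigr => i _; rewrite zE t_shiftM.
Qed.

Lemma poly_F2_sqr_comp (p : {poly 'F_2}) : p ^+ 2 = p \Po 'X^2.
Proof.
have two0 : (2%:R : {poly 'F_2}) = 0 by rewrite -polyC_natr pchar_Fp_0.
elim/poly_ind: p => [|p c IHp]; first by rewrite comp_poly0 expr0n.
rewrite sqrrD -mulr_natr two0 mulr0 addr0 exprMn IHp -polyC_exp expr2_F2.
by rewrite comp_polyD comp_polyM comp_polyX comp_polyC.
Qed.

Lemma poly_F2_exp2n_comp (p : {poly 'F_2}) k : p ^+ (2 ^ k) = p \Po 'X^(2 ^ k).
Proof.
elim: k => [|k IHk]; first by rewrite expn0 expr1 comp_polyXr.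
by rewrite expnSr exprM IHk poly_F2_sqr_comp -comp_polyA comp_Xn_poly -exprM mulnC.
Qed.

Lemma expn_sub1D m a c : (0 < m)%N ->
  (m ^ (a + c) - 1 = m ^ c * (m ^ a - 1) + (m ^ c - 1))%N.
Proof.
move=> m_gt0; rewrite expnD mulnC mulnBr muln1.
have : (1 <= m ^ c <= m ^ c * m ^ a)%N.
  by rewrite expn_gt0 m_gt0 leq_pmulr ?expn_gt0 ?m_gt0.
by move: (m ^ c)%N (m ^ c * m ^ a)%N => x y; lia.
Qed.

Lemma gcdn_expn_sub1 m a b : (0 < m)%N ->
  gcdn (m ^ a - 1) (m ^ b - 1) = (m ^ gcdn a b - 1)%N.
Proof.
move=> m_gt0; move def_n: (a + b)%N => n.
elim/ltn_ind: n a b def_n => n IHn a b def_n.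
wlog le_ab : a b def_n / (a <= b)%N => [wlog_ab|].
  have [|/ltnW] := leqP a b; first exact: wlog_ab.
  by rewrite gcdnC (gcdnC a); apply: wlog_ab; rewrite addnC.
have [-> | a_gt0] := posnP a; first by rewrite expn0 subnn !gcd0n.
rewrite -(subnKC le_ab) expn_sub1D // gcdnMDl gcdnDl (IHn (a + (b - a))%N) //.
by rewrite subnKC // -def_n -{1}[b]add0n ltn_add2r.
Qed.


(** * Conjugates of a primitive root of unity *)

Lemma map_polyXnB (K E : nzRingType) (f : {rmorphism K -> E}) m :
  map_poly f ('X^m - 1) = 'X^m - 1.
Proof. by rewrite rmorphB rmorph1 /= map_polyXn. Qed.

Lemma root_XnB (K : nzRingType) (x : K) m : root ('X^m - 1) x = (x ^+ m == 1).
Proof. by rewrite /root hornerD hornerN hornerXn hornerC subr_eq0. Qed.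

Lemma min_root_irredp (K E : fieldType) (f : {rmorphism K -> E}) (P : {poly K}) x :
    (1 < size P)%N -> root (map_poly f P) x ->
    (forall D, D != 0 -> root (map_poly f D) x -> (size P <= size D)%N) ->
  irreducible_poly P.
Proof.
move=> size_P root_P min_P; split=> // q size_q /dvdpP[r def_P].
have : P != 0 by rewrite -size_poly_gt0 (ltn_trans _ size_P).
rewrite def_P mulf_eq0 negb_or => /andP[r_neq0 q_neq0].
move: root_P; rewrite def_P rmorphM rootM => /orP[root_r|root_q].
  have := min_P r r_neq0 root_r; rewrite def_P size_mul //.
  move: size_q; rewrite -size_poly_gt0 in q_neq0.
  by move: (size r) (size q) q_neq0 => a b; lia.
rewrite -dvdp_size_eqp ?def_P ?dvdp_mull // eqn_leq dvdp_leq ?dvdp_mull ?mulf_neq0 //=.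
by rewrite -def_P min_P.
Qed.

Lemma prim_root_of_primitive_poly (F : fieldExtType 'F_2) (C : {poly 'F_2}) L x :
    (0 < L)%N -> size C = L.+1 -> primitive_poly C ->
  root (map_poly (in_alg F) C) x -> (2 ^ L - 1).-primitive_root x.
Proof.
move=> L_gt0 size_C /primitive_polyP[[irr_C C_monic]].
rewrite (card_qpoly_F2 L_gt0 size_C C_monic) => C_dvd C_ndvd root_C.
have T_gt0 : (0 < 2 ^ L - 1)%N by rewrite subn_gt0 -{1}(expn0 2) ltn_exp2l.
have : x ^+ (2 ^ L - 1) = 1.
  apply/eqP; rewrite -root_XnB -(map_polyXnB (in_alg F)).
  by rewrite (root_dvdp _ root_C) ?dvdp_map.
case/(prim_order_exists T_gt0) => m prim_m /(dvdn_leq T_gt0).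
rewrite leq_eqVlt => /orP[/eqP <- // | lt_m].
have m_gt0 := prim_order_gt0 prim_m.
case/negP: (C_ndvd m (andb_true_intro (conj m_gt0 lt_m))).
apply: (root_irredp_dvdp irr_C root_C).
by rewrite map_polyXnB root_XnB prim_expr_order.
Qed.

Lemma frobenius_fixed_poly_F2 (F : fieldExtType 'F_2) (Q : {poly F}) :
  (forall i, Q`_i ^+ 2 = Q`_i) -> exists P : {poly 'F_2}, map_poly (in_alg F) P = Q.
Proof.
move=> Q_fixed; exists (\poly_(i < size Q) (if Q`_i == 1 then 1 else 0)).
apply/polyP => i; rewrite coef_map coef_poly /=.
have [lt_i|le_i] := ltnP i (size Q); last by rewrite scale0r nth_default.
have : Q`_i * (Q`_i - 1) == 0 by rewrite mulrBr mulr1 -expr2 Q_fixed subrr.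
rewrite mulf_eq0 subr_eq0 => /orP[] /eqP ->; last by rewrite eqxx scale1r.
by rewrite eq_sym oner_eq0 scale0r.
Qed.

Lemma root_frobenius (F : fieldExtType 'F_2) (D : {poly 'F_2}) (x : F) :
  root (map_poly (in_alg F) D) x -> root (map_poly (in_alg F) D) (x ^+ 2).
Proof.
pose frob := pFrobenius_aut (pchar_F2ext F).
have frob_D : map_poly frob (map_poly (in_alg F) D) = map_poly (in_alg F) D.
  apply/polyP => i; rewrite !coef_map /= pFrobenius_autE.
  by rewrite -[in_alg F _ ^+ 2]rmorphXn expr2_F2.
rewrite /root -(pFrobenius_autE (pchar_F2ext F)) -{2}frob_D horner_map.
by move=> /eqP ->; rewrite rmorph0.
Qed.

Lemma Mersenne_ndvd_subn_exp2 L i j :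
  (i < j < L)%N -> ~~ (2 ^ L - 1 %| 2 ^ j - 2 ^ i)%N.
Proof.
case/andP=> lt_ij lt_jL.
have -> : (2 ^ j - 2 ^ i = 2 ^ i * (2 ^ (j - i) - 1))%N.
  by rewrite -{1}(subnKC (ltnW lt_ij)) expnD mulnBr muln1.
have odd_T : odd (2 ^ L - 1).
  by rewrite oddB ?expn_gt0 // oddX orbF addbT -lt0n (leq_trans (ltn0Sn j) lt_jL).
rewrite Gauss_dvdr ?coprimeXr ?coprimen2 // gtnNdvd //.
  by rewrite subn_gt0 -{1}(expn0 2) ltn_exp2l // subn_gt0.
by rewrite ltn_sub2rE ?expn_gt0 // ltn_exp2l // (leq_ltn_trans (leq_subr i j) lt_jL).
Qed.

Section Conjugates.

Variables (F : fieldExtType 'F_2) (L : nat) (y : F).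
Hypotheses (L_gt0 : (0 < L)%N) (prim_y : (2 ^ L - 1).-primitive_root y).

Definition conjugates := [seq y ^+ (2 ^ i) | i <- iota 0%N L].

Definition conjugates_poly := \prod_(z <- conjugates) ('X - z%:P).

Lemma expr_exp2_order : y ^+ (2 ^ L) = y.
Proof. by rewrite -(subnK (expn_gt0 2 L)) exprD prim_expr_order // mul1r expr1. Qed.

Lemma root_conjugates_poly : root conjugates_poly y.
Proof.
by rewrite root_prod_XsubC; apply/mapP; exists 0%N; rewrite ?mem_iota ?expn0 ?expr1.
Qed.

Lemma uniq_conjugates : uniq conjugates.
Proof.
rewrite map_inj_in_uniq ?iota_uniq // => i j; rewrite !mem_iota !add0n.
move=> /andP[_ i_lt] /andP[_ j_lt] /eqP; rewrite (eq_prim_root_expr prim_y).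
have [lt_ij|lt_ji|//] := ltngtP i j.
  rewrite eq_sym eqn_mod_dvd; last by rewrite leq_exp2l // ltnW.
  by rewrite (negPf (Mersenne_ndvd_subn_exp2 _)) // lt_ij.
rewrite eqn_mod_dvd; last by rewrite leq_exp2l // ltnW.
by rewrite (negPf (Mersenne_ndvd_subn_exp2 _)) // lt_ji.
Qed.

Lemma root_conjugates (D : {poly 'F_2}) :
  root (map_poly (in_alg F) D) y -> all (root (map_poly (in_alg F) D)) conjugates.
Proof.
move=> root_y; apply/allP => _ /mapP[i _ ->].
elim: i => [|i IHi]; first by rewrite expn0 expr1.
by rewrite expnSr exprM root_frobenius.
Qed.

Lemma size_vanishing_gt (D : {poly 'F_2}) :
  D != 0 -> root (map_poly (in_alg F) D) y -> (L < size D)%N.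
Proof.
move=> D_neq0 /root_conjugates root_D.
rewrite -(size_map_poly (in_alg F)) -[X in (X < _)%N](size_iota 0%N).
rewrite -(size_map (fun i => y ^+ (2 ^ i))).
by apply: max_poly_roots; rewrite ?map_poly_eq0 ?uniq_rootsE ?uniq_conjugates.
Qed.

Lemma frobenius_conjugates_poly i : conjugates_poly`_i ^+ 2 = conjugates_poly`_i.
Proof.
pose frob := pFrobenius_aut (pchar_F2ext F).
suff frob_Q : map_poly frob conjugates_poly = conjugates_poly.
  by rewrite -[in RHS]frob_Q coef_map.
rewrite /conjugates_poly rmorph_prod /conjugates !big_map.
under eq_bigr => k _ do
  rewrite rmorphB /= map_polyX map_polyC /= pFrobenius_autE -exprM -expnSr.
have -> : iota 0%N L = index_iota 0%N L by rewrite /index_iota subn0.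
rewrite -(prednK L_gt0) big_nat_recr // [RHS]big_nat_recl //= mulrC.
by rewrite prednK // expr_exp2_order expn0 expr1.
Qed.

Lemma primitive_poly_conjugates (P : {poly 'F_2}) :
  map_poly (in_alg F) P = conjugates_poly -> primitive_poly P.
Proof.
move=> P_conj.
have size_P : size P = L.+1.
  by rewrite -(size_map_poly (in_alg F)) P_conj size_prod_XsubC size_map size_iota.
have P_monic : P \is monic by rewrite -(map_monic (in_alg F)) P_conj monic_prod_XsubC.
have root_P : root (map_poly (in_alg F) P) y by rewrite P_conj root_conjugates_poly.
apply/primitive_polyP; rewrite (card_qpoly_F2 L_gt0 size_P P_monic); split.
- split=> //; apply: (min_root_irredp _ root_P); first by rewrite size_P.
  by move=> D D_neq0 /(size_vanishing_gt D_neq0); rewrite size_P.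
- rewrite -(dvdp_map (in_alg F)) map_polyXnB P_conj.
  apply: uniq_roots_dvdp; last by rewrite uniq_rootsE uniq_conjugates.
  apply/allP => _ /mapP[i _ ->].
  by rewrite root_XnB -exprM mulnC exprM (prim_expr_order prim_y) expr1n.
- move=> n /andP[n_gt0 n_lt]; apply: contraL n_lt.
  rewrite -(dvdp_map (in_alg F)) map_polyXnB => /root_dvdp/(_ root_P).
  by rewrite root_XnB -(prim_order_dvd prim_y) -leqNgt => /(dvdn_leq n_gt0).
Qed.

End Conjugates.

Theorem lemma2 (L1 L2 : nat) (C1 C2 : {poly 'F_2}) (u v : nat -> 'F_2)
    (F : fieldExtType 'F_2) (lambda : F)
    (hL1 : (0 < L1)%N) (hL12 : (L1 < L2)%N) (hcop : coprime L1 L2)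
    (hSR1 : ml_lfsr L1 C1 u) (hSR2 : ml_lfsr L2 C2 v)
    (hF : \dim {: F} = L2)
    (hroot : root (map_poly (in_alg F) C2) lambda) :
  let E := (2 ^ L1 - 1)%N in
  let N := (2 ^ L1.-1)%N in
  exists P : {poly 'F_2},
    [/\ map_poly (in_alg F) P
          = \prod_(i < L2) ('X + (lambda ^+ (2 ^ i * E))%:P),
        primitive_poly P
      & forall z : nat -> 'F_2, shrunken u v z -> lin_rec (P ^+ N) z].
Proof.
move=> E N; have L2_gt0 : (0 < L2)%N := ltn_trans hL1 hL12.
have [size_C2 C2_prim rec_v _] := hSR2.
have prim_lambda := prim_root_of_primitive_poly L2_gt0 size_C2 C2_prim hroot.
have prim_y : (2 ^ L2 - 1).-primitive_root (lambda ^+ E).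
  by rewrite prim_root_exp_coprime // /coprime gcdn_expn_sub1 // (eqP hcop).
have [P P_conj] := frobenius_fixed_poly_F2 (frobenius_conjugates_poly L2_gt0 prim_y).
exists P; split.
- rewrite P_conj /conjugates_poly big_map.
  have -> : iota 0%N L2 = index_iota 0%N L2 by rewrite /index_iota subn0.
  rewrite big_mkord; apply: eq_bigr => i _.
  by rewrite -exprM mulnC -polyCN oppr_pchar2 // pchar_F2ext.
- exact: primitive_poly_conjugates L2_gt0 prim_y P P_conj.
move=> z shr_z.
have C2_dvd : C2 %| P \Po 'X^E.
  apply: (root_irredp_dvdp (f := in_alg F) _ hroot).
    by case/primitive_polyP: C2_prim => -[].
  rewrite map_comp_poly map_polyXn /root horner_comp hornerXn P_conj.
  exact: root_conjugates_poly.
rewrite /N poly_F2_exp2n_comp.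
apply: shrunken_lin_rec (lin_rec_dvdp C2_dvd rec_v) shr_z.
  exact: mseq_periodic hL1 hSR1.
exact: mseq_count_ones hL1 hSR1.
Qed.
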